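(* Let $N\ge1$, $\theta\in[0,1)$, and real numbers $a_0,\dots,a_N$ with $\sum_k a_k^2=1$. Define the probability distribution $\Pr(l)=\frac{1}{N+1}\bigl|\sum_{k=0}^N a_k e^{2\pi i k(\theta-l/(N+1))}\bigr|^2$ for $l=0,\dots,N$, and $W=\sum_{l=0}^N\Pr(l)\bigl[1-\cos\bigl(2\pi(\theta-\tfrac{l}{N+1})\bigr)\bigr]$. Then $W=1-\sum_{k=1}^N a_{k-1}a_k-a_0a_N\cos(2\pi(N+1)\theta)$. Consequently, if $a_0=0$ then $W$ is independent of $\theta$, and the minimum of $W$ over all real $a_1,\dots,a_N$ with $\sum_{k=1}^N a_k^2=1$ (and $a_0=0$) equals $2\sin^2\frac{\pi}{2N+2}$, attained at $a_k=\sqrt{\frac{2}{N+1}}\sin\frac{k\pi}{N+1}$.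
   Context: This $W$ is the expected value of $1-\cos(2\pi(\hat\theta-\theta))$ for the estimator $\hat\theta=l/(N+1)$ of the phase $\theta$ of $U=\mathrm{diag}(1,e^{2\pi i\theta})$ in the parallel entangled strategy with Fourier-basis measurement. *)

From Stdlib Require Import Reals.
From Coquelicot Require Import Coquelicot.
Open Scope R_scope.

Definition cexpi (x : R) : C := (cos x, sin x).

Definition Pr (N : nat) (theta : R) (a : nat -> R) (l : nat) : R :=
  / INR (N + 1) *
  (Cmod (sum_n (fun k : nat =>
      Cmult (RtoC (a k))
            (cexpi (2 * PI * INR k * (theta - INR l / INR (N + 1))))) N)) ^ 2.

Definition W (N : nat) (theta : R) (a : nat -> R) : R :=
  sum_n (fun l : nat =>
    Pr N theta a l * (1 - cos (2 * PI * (theta - INR l / INR (N + 1))))) N.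

From Stdlib Require Import Reals Lra Lia ZArith.
From Coquelicot Require Import Coquelicot.
Open Scope R_scope.

(* Expanding the squared modulus writes W as a quadratic form in a whose entries are
   second differences of the sums T(m) = sum_l cos (m * 2 pi (theta - l / (N + 1))).
   For integers |m| <= N + 1 these vanish except T(0) = N + 1 and
   T(+-(N + 1)) = (N + 1) cos (2 pi (N + 1) theta), which gives the closed form.
   For a_0 = 0 it remains to bound sum a_(k-1) a_k: the sines s_k = sin (k pi / (N + 1))
   are positive on 1..N, vanish at 0 and N + 1 and satisfy
   s_(k+1) + s_(k-1) = 2 cos (pi / (N + 1)) s_k, so summing the weighted AM-GM
   inequalities 2 a_k a_(k+1) <= a_k^2 s_(k+1) / s_k + a_(k+1)^2 s_k / s_(k+1)
   gives sum a_(k-1) a_k <= cos (pi / (N + 1)) sum a_k^2, with equality for a = s. *)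

(* [sum_n] is typed in an [AbelianMonoid]; [ring] and [field] read the carrier off the
   left-hand side, so we move everything to a difference in [R]. *)
Ltac R_eq := apply Rminus_diag_uniq.

Lemma sum_n_Rplus (f g : nat -> R) n :
  sum_n (fun k => f k + g k) n = sum_n f n + sum_n g n.
Proof. exact (sum_n_plus f g n). Qed.

Lemma sum_n_Rmult_l (c : R) (f : nat -> R) n :
  sum_n (fun k => c * f k) n = c * sum_n f n.
Proof. exact (sum_n_mult_l c f n). Qed.

Lemma sum_n_Rsucc (f : nat -> R) n : sum_n f (S n) = sum_n f n + f (S n).
Proof. exact (sum_Sn f n). Qed.

Lemma sum_n_Rsucc_l (f : nat -> R) n :
  sum_n f (S n) = f 0%nat + sum_n (fun k => f (S k)) n.
Proof.
  induction n as [|n IH].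
  - rewrite sum_n_Rsucc, !sum_O. reflexivity.
  - rewrite sum_n_Rsucc, IH, (sum_n_Rsucc (fun k => f (S k))). R_eq; ring.
Qed.

Lemma sum_n_Rminus (f g : nat -> R) n :
  sum_n (fun k => f k - g k) n = sum_n f n - sum_n g n.
Proof.
  induction n as [|n IH]; [rewrite !sum_O; reflexivity|].
  rewrite !sum_n_Rsucc, IH. R_eq; ring.
Qed.

Lemma sum_n_split_head (f : nat -> R) M : sum_n f (S M) = f 0%nat + sum_n_m f 1 (S M).
Proof. rewrite sum_n_Rsucc_l, <- sum_n_m_S. reflexivity. Qed.

Lemma sum_n_adjacent (a : nat -> R) M :
  sum_n_m (fun k => a (k - 1)%nat * a k) 1 (S M) = sum_n (fun j => a j * a (S j)) M.
Proof.
  rewrite <- sum_n_m_S. apply sum_n_m_ext. intros j. rewrite Nat.sub_succ, Nat.sub_0_r.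
  reflexivity.
Qed.

Lemma sum_n_Rle (f g : nat -> R) n :
  (forall k, (k <= n)%nat -> f k <= g k) -> sum_n f n <= sum_n g n.
Proof.
  induction n as [|n IH]; intros Hfg; [rewrite !sum_O; apply Hfg; lia|].
  rewrite !sum_n_Rsucc. apply Rplus_le_compat; [apply IH; intros; apply Hfg|apply Hfg]; lia.
Qed.

Lemma sum_n_Rmult (f g : nat -> R) n :
  sum_n f n * sum_n g n = sum_n (fun j => sum_n (fun k => f j * g k) n) n.
Proof.
  rewrite Rmult_comm, <- sum_n_Rmult_l. apply sum_n_ext; intros j.
  rewrite Rmult_comm, <- sum_n_Rmult_l. reflexivity.
Qed.

Lemma sum_n_Rswitch (u : nat -> nat -> R) m n :
  sum_n (fun i => sum_n (fun j => u i j) n) m = sum_n (fun j => sum_n (fun i => u i j) m) n.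
Proof. exact (sum_n_switch u m n). Qed.

Lemma Re_sum_n (f : nat -> C) n : Re (sum_n f n) = sum_n (fun k => Re (f k)) n.
Proof.
  induction n as [|n IH]; [rewrite !sum_O; reflexivity|].
  rewrite (sum_Sn f n), sum_n_Rsucc, <- IH. reflexivity.
Qed.

Lemma Im_sum_n (f : nat -> C) n : Im (sum_n f n) = sum_n (fun k => Im (f k)) n.
Proof.
  induction n as [|n IH]; [rewrite !sum_O; reflexivity|].
  rewrite (sum_Sn f n), sum_n_Rsucc, <- IH. reflexivity.
Qed.

Definition kron (i j : nat) : R := if Nat.eqb i j then 1 else 0.

Lemma kron_sym i j : kron i j = kron j i.
Proof. unfold kron. rewrite Nat.eqb_sym. reflexivity. Qed.

Lemma sum_n_kron (f : nat -> R) i n :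
  (i <= n)%nat -> sum_n (fun k => f k * kron k i) n = f i.
Proof.
  unfold kron. induction n as [|n IH]; intros Hi.
  - rewrite sum_O. replace i with 0%nat by lia. simpl. R_eq; ring.
  - rewrite sum_n_Rsucc. destruct (Nat.eqb_spec (S n) i) as [<-|Hne].
    + rewrite (sum_n_ext_loc _ (fun _ => 0)), sum_n_const; [R_eq; ring|].
      intros k Hk. destruct (Nat.eqb_spec k (S n)); [lia|]. R_eq; ring.
    + rewrite IH by lia. R_eq; ring.
Qed.

Lemma sum_n_kron_out (f : nat -> R) i n :
  (n < i)%nat -> sum_n (fun k => f k * kron k i) n = 0.
Proof.
  intros Hi. unfold kron. rewrite (sum_n_ext_loc _ (fun _ => 0)), sum_n_const.
  - R_eq; ring.
  - intros k Hk. destruct (Nat.eqb_spec k i); [lia|]. R_eq; ring.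
Qed.

Definition phase (N : nat) (theta : R) (l : nat) : R :=
  2 * PI * (theta - INR l / INR (N + 1)).

Definition char_sum (N : nat) (theta m : R) : R :=
  sum_n (fun l => cos (m * phase N theta l)) N.

Lemma INR_succ_pos N : 0 < INR (N + 1).
Proof. rewrite plus_INR. simpl. pose proof (pos_INR N). lra. Qed.

Lemma sum_cos_arith (x b : R) n :
  2 * sin b * sum_n (fun l => cos (x - INR l * (2 * b))) n
  = sin (x + b) - sin (x - INR n * (2 * b) - b).
Proof.
  assert (Hprod : forall y, 2 * sin b * cos y = sin (y + b) - sin (y - b))
    by (intros y; rewrite sin_plus, sin_minus; ring).
  induction n as [|n IH].
  - rewrite sum_O, Hprod. simpl. do 2 f_equal; f_equal; ring.
  - rewrite sum_n_Rsucc, Rmult_plus_distr_l, IH, Hprod, S_INR.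
    replace (x - (INR n + 1) * (2 * b) + b) with (x - INR n * (2 * b) - b) by ring.
    R_eq; ring.
Qed.

Lemma char_sum_opp N theta m : char_sum N theta (- m) = char_sum N theta m.
Proof.
  apply sum_n_ext; intros l. rewrite Ropp_mult_distr_l_reverse. apply cos_neg.
Qed.

Lemma char_sum_0 N theta : char_sum N theta 0 = INR (N + 1).
Proof.
  unfold char_sum. rewrite (sum_n_ext _ (fun _ => 1)), sum_n_const.
  - rewrite plus_INR, S_INR. simpl. R_eq; ring.
  - intros l. rewrite Rmult_0_l. apply cos_0.
Qed.

Lemma char_sum_full N theta :
  char_sum N theta (INR (N + 1)) = INR (N + 1) * cos (2 * PI * INR (N + 1) * theta).
Proof.
  pose proof (INR_succ_pos N) as Hn. unfold char_sum.
  rewrite (sum_n_ext _ (fun _ => cos (2 * PI * INR (N + 1) * theta))), sum_n_const.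
  - rewrite plus_INR, S_INR. simpl. R_eq; ring.
  - intros l. rewrite <- (cos_period _ l). f_equal. unfold phase. field. lra.
Qed.

Lemma char_sum_vanish N theta p :
  (0 < p < N + 1)%nat -> char_sum N theta (INR p) = 0.
Proof.
  intros Hp. pose proof (INR_succ_pos N) as Hn. pose proof PI_RGT_0.
  set (b := PI * INR p / INR (N + 1)).
  assert (Hb : 0 < sin b).
  { assert (INR p < INR (N + 1)) by (apply lt_INR; lia).
    assert (0 < INR p) by (apply lt_0_INR; lia).
    apply sin_gt_0; unfold b.
    - apply Rdiv_lt_0_compat; [apply Rmult_lt_0_compat|]; lra.
    - apply Rmult_lt_reg_r with (INR (N + 1)); [lra|].
      unfold Rdiv. rewrite Rmult_assoc, Rinv_l by lra. nra. }
  apply (Rmult_eq_reg_l (2 * sin b)); [|lra]. rewrite Rmult_0_r.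
  set (x := 2 * PI * INR p * theta). unfold char_sum.
  rewrite (sum_n_ext _ (fun l => cos (x - INR l * (2 * b)))), sum_cos_arith.
  - replace (x - INR N * (2 * b) - b) with (x + b - 2 * INR p * PI).
    + rewrite <- (sin_period (x + b - 2 * INR p * PI) p).
      replace (x + b - 2 * INR p * PI + 2 * INR p * PI) with (x + b) by ring. ring.
    + unfold b. rewrite plus_INR in *. simpl in *. field. lra.
  - intros l. f_equal. unfold x, b, phase. field. lra.
Qed.

Lemma char_sum_INR N theta p : (p <= N + 1)%nat ->
  char_sum N theta (INR p) =
  if Nat.eqb p 0 then INR (N + 1)
  else if Nat.eqb p (N + 1) then INR (N + 1) * cos (2 * PI * INR (N + 1) * theta)
  else 0.
Proof.
  intros Hp. destruct (Nat.eqb_spec p 0) as [->|Hp0]; [apply char_sum_0|].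
  destruct (Nat.eqb_spec p (N + 1)) as [->|HpN]; [apply char_sum_full|].
  apply char_sum_vanish; lia.
Qed.

Lemma char_sum_IZR N theta z :
  char_sum N theta (IZR z) = char_sum N theta (INR (Z.abs_nat z)).
Proof.
  rewrite INR_IZR_INZ, Nat2Z.inj_abs_nat, <- Rabs_Zabs.
  unfold Rabs. destruct (Rcase_abs (IZR z)); [rewrite char_sum_opp|]; reflexivity.
Qed.

Definition gram (N : nat) (c : R) (j k : nat) : R :=
  kron j k - /2 * kron j (S k) - /2 * kron (S j) k
  - /2 * c * (kron j N * kron k 0 + kron j 0 * kron k N).

Lemma char_sum_second_difference N theta j k :
  (1 <= N)%nat -> (j <= N)%nat -> (k <= N)%nat ->
  / INR (N + 1) * (char_sum N theta (INR j - INR k)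
    - /2 * char_sum N theta (INR j - INR k + 1)
    - /2 * char_sum N theta (INR j - INR k - 1))
  = gram N (cos (2 * PI * INR (N + 1) * theta)) j k.
Proof.
  intros HN Hj Hk. pose proof (INR_succ_pos N) as Hn.
  rewrite (INR_IZR_INZ j), (INR_IZR_INZ k), <- minus_IZR.
  rewrite <- plus_IZR, <- minus_IZR, !char_sum_IZR, !char_sum_INR by lia.
  unfold gram, kron.
  repeat match goal with
  | |- context [Nat.eqb ?x ?y] => destruct (Nat.eqb_spec x y); try (exfalso; lia)
  end; field; lra.
Qed.

Lemma gram_row N c (a : nat -> R) j : (j <= N)%nat ->
  sum_n (fun k => a k * gram N c j k) N =
  a j - /2 * (match j with 0 => 0 | S i => a i end)
  - /2 * (if Nat.leb (S j) N then a (S j) else 0)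
  - /2 * c * (kron j N * a 0%nat + kron j 0 * a N).
Proof.
  intros Hj. unfold gram.
  rewrite (sum_n_ext _ (fun k => a k * kron k j - /2 * (a k * kron j (S k))
     - /2 * (a k * kron k (S j))
     - /2 * c * (kron j N * (a k * kron k 0) + kron j 0 * (a k * kron k N)))).
  2:{ intros k. rewrite (kron_sym j k), (kron_sym (S j) k). R_eq; ring. }
  rewrite !sum_n_Rminus, !sum_n_Rmult_l, sum_n_Rplus, !sum_n_Rmult_l.
  rewrite (sum_n_kron a j), (sum_n_kron a 0), (sum_n_kron a N) by lia.
  assert (Hnext : sum_n (fun k => a k * kron k (S j)) N
                  = if Nat.leb (S j) N then a (S j) else 0).
  { destruct (Nat.leb_spec (S j) N).
    - apply sum_n_kron; lia.
    - apply sum_n_kron_out; lia. }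
  assert (Hprev : sum_n (fun k => a k * kron j (S k)) N
                  = match j with 0 => 0 | S i => a i end).
  { destruct j as [|i].
    - rewrite (sum_n_ext _ (fun _ => 0)), sum_n_const; [R_eq; ring|].
      intros k. unfold kron. simpl. R_eq; ring.
    - rewrite (sum_n_ext _ (fun k => a k * kron k i))
        by (intros k; unfold kron; simpl; rewrite Nat.eqb_sym; reflexivity).
      apply sum_n_kron; lia. }
  rewrite Hnext, Hprev. reflexivity.
Qed.

Lemma gram_quadratic_form N c (a : nat -> R) : (1 <= N)%nat ->
  sum_n (fun j => a j * sum_n (fun k => a k * gram N c j k) N) N
  = sum_n (fun k => a k ^ 2) N - sum_n_m (fun k => a (k - 1)%nat * a k) 1 N
    - a 0%nat * a N * c.
Proof.
  intros HN. destruct N as [|M]; [lia|].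
  rewrite (sum_n_ext_loc _ (fun j => a j ^ 2
      - /2 * (a j * match j with 0 => 0 | S i => a i end)
      - /2 * (a j * if Nat.leb (S j) (S M) then a (S j) else 0)
      - /2 * c * (a j * a 0%nat * kron j (S M) + a j * a (S M) * kron j 0))).
  2:{ intros j Hj. rewrite gram_row by exact Hj. R_eq; ring. }
  rewrite !sum_n_Rminus, !sum_n_Rmult_l, sum_n_Rplus, sum_n_adjacent.
  rewrite (sum_n_kron (fun j => a j * a 0%nat)), (sum_n_kron (fun j => a j * a (S M)))
    by lia.
  rewrite (sum_n_Rsucc_l (fun j => a j * match j with 0 => 0 | S i => a i end)).
  rewrite (sum_n_Rsucc (fun j => a j * if Nat.leb (S j) (S M) then a (S j) else 0)).
  replace (Nat.leb (S (S M)) (S M)) with false by (symmetry; apply Nat.leb_gt; lia).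
  rewrite (sum_n_ext_loc (fun j => a j * (if Nat.leb (S j) (S M) then a (S j) else 0))
             (fun j => a j * a (S j))).
  2:{ intros j Hj. replace (Nat.leb (S j) (S M)) with true
        by (symmetry; apply Nat.leb_le; lia). reflexivity. }
  rewrite (sum_n_ext (fun k => a (S k) * a k) (fun j => a j * a (S j)))
    by (intros; apply Rmult_comm).
  simpl. R_eq; field.
Qed.

Lemma Cmod_sum_sqr (a : nat -> R) (psi : R) n :
  Cmod (sum_n (fun k => Cmult (RtoC (a k)) (cexpi (INR k * psi))) n) ^ 2
  = sum_n (fun j => sum_n (fun k => a j * a k * cos ((INR j - INR k) * psi)) n) n.
Proof.
  rewrite Cmod2_alt, Re_sum_n, Im_sum_n.
  rewrite (sum_n_ext _ (fun k => a k * cos (INR k * psi)))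
    by (intros k; unfold cexpi; simpl; R_eq; ring).
  rewrite (sum_n_ext (fun k => Im _) (fun k => a k * sin (INR k * psi)))
    by (intros k; unfold cexpi; simpl; R_eq; ring).
  rewrite <- !Rsqr_pow2. unfold Rsqr. rewrite !sum_n_Rmult, <- sum_n_Rplus.
  apply sum_n_ext; intros j. rewrite <- sum_n_Rplus. apply sum_n_ext; intros k.
  rewrite Rmult_minus_distr_r, cos_minus. R_eq; ring.
Qed.

Lemma Pr_double_sum N theta a l :
  Pr N theta a l = / INR (N + 1) *
    sum_n (fun j => sum_n (fun k => a j * a k * cos ((INR j - INR k) * phase N theta l)) N) N.
Proof.
  unfold Pr. rewrite <- Cmod_sum_sqr. do 3 f_equal.
  apply sum_n_ext; intros k. unfold phase. do 2 f_equal. ring.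
Qed.

Lemma cos_mul_one_minus_cos m p :
  cos (m * p) * (1 - cos p)
  = cos (m * p) - /2 * cos ((m + 1) * p) - /2 * cos ((m - 1) * p).
Proof.
  replace ((m + 1) * p) with (m * p + p) by ring.
  replace ((m - 1) * p) with (m * p - p) by ring.
  rewrite cos_plus, cos_minus. field.
Qed.

Lemma W_gram_form N theta a : (1 <= N)%nat ->
  W N theta a = sum_n (fun j => a j *
    sum_n (fun k => a k * gram N (cos (2 * PI * INR (N + 1) * theta)) j k) N) N.
Proof.
  intros HN. pose proof (INR_succ_pos N). unfold W.
  rewrite (sum_n_ext _ (fun l => sum_n (fun j => sum_n (fun k =>
      a j * a k / INR (N + 1) * (cos ((INR j - INR k) * phase N theta l)
        - /2 * cos ((INR j - INR k + 1) * phase N theta l)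
        - /2 * cos ((INR j - INR k - 1) * phase N theta l))) N) N)).
  2:{ intros l. rewrite Pr_double_sum. fold (phase N theta l).
      rewrite Rmult_comm, <- Rmult_assoc, <- sum_n_Rmult_l. apply sum_n_ext; intros j.
      rewrite <- sum_n_Rmult_l. apply sum_n_ext; intros k.
      rewrite <- cos_mul_one_minus_cos. R_eq; field. lra. }
  rewrite sum_n_Rswitch. apply sum_n_ext_loc; intros j Hj.
  rewrite sum_n_Rswitch, <- sum_n_Rmult_l. apply sum_n_ext_loc; intros k Hk.
  rewrite sum_n_Rmult_l, !sum_n_Rminus, !sum_n_Rmult_l.
  rewrite <- (char_sum_second_difference N theta j k) by lia.
  unfold char_sum. R_eq; field. lra.
Qed.

Lemma W_closed_form N theta a : (1 <= N)%nat ->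
  W N theta a = sum_n (fun k => a k ^ 2) N - sum_n_m (fun k => a (k - 1)%nat * a k) 1 N
    - a 0%nat * a N * cos (2 * PI * INR (N + 1) * theta).
Proof. intros HN. rewrite W_gram_form by exact HN. apply gram_quadratic_form, HN. Qed.

Lemma weighted_am_gm x y p q : 0 < p -> 0 < q ->
  2 * (x * y) <= x ^ 2 / p * q + y ^ 2 / q * p.
Proof.
  intros Hp Hq.
  assert (Hsq : x ^ 2 / p * q + y ^ 2 / q * p - 2 * (x * y) = (x * q - y * p) ^ 2 / (p * q))
    by (field; lra).
  assert (0 <= (x * q - y * p) ^ 2 / (p * q)).
  { apply Rdiv_le_0_compat; [apply pow2_ge_0|apply Rmult_lt_0_compat; lra]. }
  lra.
Qed.

Section Adjacent_products.

Variables (M : nat) (c : R) (s : nat -> R).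
Hypothesis s_0 : s 0%nat = 0.
Hypothesis s_end : s (S (S M)) = 0.
Hypothesis s_pos : forall k, (1 <= k <= S M)%nat -> 0 < s k.
Hypothesis s_rec : forall k, (1 <= k <= S M)%nat -> s (S k) + s (pred k) = 2 * c * s k.

(* [u a 0] is the junk value [a 0 ^ 2 / 0 = 0]. *)
Let u (a : nat -> R) (j : nat) : R := a j ^ 2 / s j.

Lemma sum_weighted_adjacent (a : nat -> R) : a 0%nat = 0 ->
  sum_n (fun j => u a j * s (S j) + u a (S j) * s j) M
  = 2 * c * sum_n (fun k => a k ^ 2) (S M).
Proof.
  intros Ha0.
  assert (Hu0 : u a 0 = 0) by (unfold u; rewrite Ha0; unfold Rdiv; ring).
  rewrite sum_n_Rplus.
  assert (Hfwd : sum_n (fun j => u a j * s (S j)) M = sum_n (fun j => u a j * s (S j)) (S M))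
    by (rewrite sum_n_Rsucc, s_end, Rmult_0_r, Rplus_0_r; reflexivity).
  assert (Hbwd : sum_n (fun j => u a (S j) * s j) M
                 = sum_n (fun j => u a j * s (pred j)) (S M))
    by (rewrite sum_n_Rsucc_l, Hu0, Rmult_0_l, Rplus_0_l; reflexivity).
  rewrite Hfwd, Hbwd, <- sum_n_Rplus, <- sum_n_Rmult_l.
  apply sum_n_ext_loc; intros [|j] Hj.
  - rewrite Hu0, Ha0. R_eq; ring.
  - rewrite <- Rmult_plus_distr_l, s_rec by lia. unfold u.
    pose proof (s_pos (S j) ltac:(lia)). R_eq; field. lra.
Qed.

Lemma adjacent_products_le (a : nat -> R) : a 0%nat = 0 ->
  2 * sum_n (fun j => a j * a (S j)) M <= 2 * c * sum_n (fun k => a k ^ 2) (S M).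
Proof.
  intros Ha0. rewrite <- sum_weighted_adjacent, <- sum_n_Rmult_l by exact Ha0.
  apply sum_n_Rle; intros [|j] Hj.
  - unfold u. rewrite Ha0, s_0. unfold Rdiv. lra.
  - apply weighted_am_gm; apply s_pos; lia.
Qed.

Lemma adjacent_products_eq (lam : R) :
  2 * sum_n (fun j => lam * s j * (lam * s (S j))) M
  = 2 * c * sum_n (fun k => (lam * s k) ^ 2) (S M).
Proof.
  rewrite <- (sum_weighted_adjacent (fun k => lam * s k)) by (rewrite s_0; ring).
  rewrite <- sum_n_Rmult_l. apply sum_n_ext; intros j. unfold u.
  assert (Hu : forall k, (lam * s k) ^ 2 / s k = lam ^ 2 * s k).
  { intros k. destruct (Req_dec (s k) 0) as [E|E].
    - rewrite E. unfold Rdiv. ring.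
    - field. exact E. }
  rewrite !Hu. R_eq; ring.
Qed.

End Adjacent_products.

Definition sin_mode (N k : nat) : R := sin (INR k * PI / INR (N + 1)).

Lemma sin_mode_0 N : sin_mode N 0 = 0.
Proof. unfold sin_mode. simpl. unfold Rdiv. rewrite !Rmult_0_l. apply sin_0. Qed.

Lemma sin_mode_end N : sin_mode N (S N) = 0.
Proof.
  pose proof (INR_succ_pos N). unfold sin_mode. replace (S N) with (N + 1)%nat by lia.
  replace (INR (N + 1) * PI / INR (N + 1)) with PI by (field; lra). apply sin_PI.
Qed.

Lemma sin_mode_pos N k : (1 <= k <= N)%nat -> 0 < sin_mode N k.
Proof.
  intros Hk. pose proof (INR_succ_pos N). pose proof PI_RGT_0.
  assert (0 < INR k) by (apply lt_0_INR; lia).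
  assert (INR k < INR (N + 1)) by (apply lt_INR; lia).
  apply sin_gt_0.
  - apply Rdiv_lt_0_compat; [apply Rmult_lt_0_compat|]; lra.
  - apply (Rmult_lt_reg_r (INR (N + 1))); [lra|].
    unfold Rdiv. rewrite Rmult_assoc, Rinv_l, Rmult_1_r by lra. nra.
Qed.

Lemma sin_mode_rec N k : (1 <= k)%nat ->
  sin_mode N (S k) + sin_mode N (pred k) = 2 * cos (PI / INR (N + 1)) * sin_mode N k.
Proof.
  intros Hk. destruct k as [|k]; [lia|]. unfold sin_mode, Rdiv. simpl pred.
  set (x := PI * / INR (N + 1)).
  replace (INR (S (S k)) * PI * / INR (N + 1)) with (INR (S k) * x + x)
    by (unfold x; rewrite (S_INR (S k)); ring).
  replace (INR k * PI * / INR (N + 1)) with (INR (S k) * x - x)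
    by (unfold x; rewrite S_INR; ring).
  replace (INR (S k) * PI * / INR (N + 1)) with (INR (S k) * x) by (unfold x; ring).
  rewrite sin_plus, sin_minus. ring.
Qed.

Lemma sum_sin_mode_sq N : (1 <= N)%nat ->
  sum_n (fun k => sin_mode N k ^ 2) N = INR (N + 1) / 2.
Proof.
  intros HN. pose proof (INR_succ_pos N).
  rewrite (sum_n_ext _ (fun k => /2 - /2 * cos (INR 1 * phase N 0 k))).
  - rewrite sum_n_Rminus, sum_n_Rmult_l, sum_n_const.
    change (sum_n _ N) with (char_sum N 0 (INR 1)). rewrite char_sum_vanish by lia.
    rewrite plus_INR, S_INR. simpl. R_eq; field.
  - intros k. unfold sin_mode, phase. simpl INR.
    replace (1 * (2 * PI * (0 - INR k / INR (N + 1)))) with (- (2 * (INR k * PI / INR (N + 1))))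
      by (field; lra).
    rewrite cos_neg, cos_2a_sin. R_eq; field.
Qed.

Lemma sum_scaled_sin_mode_sq N : (1 <= N)%nat ->
  sum_n (fun k => (sqrt (2 / INR (N + 1)) * sin_mode N k) ^ 2) N = 1.
Proof.
  intros HN. pose proof (INR_succ_pos N).
  rewrite (sum_n_ext _ (fun k => 2 / INR (N + 1) * sin_mode N k ^ 2)).
  - rewrite sum_n_Rmult_l, sum_sin_mode_sq by exact HN. R_eq; field. lra.
  - intros k. rewrite Rpow_mult_distr, pow2_sqrt; [reflexivity|].
    apply Rlt_le, Rdiv_lt_0_compat; lra.
Qed.

Lemma one_minus_cos_half_angle N :
  1 - cos (PI / INR (N + 1)) = 2 * sin (PI / INR (2 * N + 2)) ^ 2.
Proof.
  pose proof (INR_succ_pos N).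
  replace (PI / INR (N + 1)) with (2 * (PI / INR (2 * N + 2))).
  - rewrite cos_2a_sin. ring.
  - replace (INR (2 * N + 2)) with (2 * INR (N + 1)) by (rewrite !plus_INR, mult_INR; simpl; ring).
    field. lra.
Qed.

Lemma sin_mode_adjacent_le M (a : nat -> R) : a 0%nat = 0 ->
  2 * sum_n (fun j => a j * a (S j)) M
  <= 2 * cos (PI / INR (S M + 1)) * sum_n (fun k => a k ^ 2) (S M).
Proof.
  apply adjacent_products_le with (s := sin_mode (S M)).
  - apply sin_mode_0.
  - apply sin_mode_end.
  - apply sin_mode_pos.
  - intros k Hk. apply sin_mode_rec. lia.
Qed.

Lemma sin_mode_adjacent_eq M (lam : R) :
  2 * sum_n (fun j => lam * sin_mode (S M) j * (lam * sin_mode (S M) (S j))) M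
  = 2 * cos (PI / INR (S M + 1)) * sum_n (fun k => (lam * sin_mode (S M) k) ^ 2) (S M).
Proof.
  apply adjacent_products_eq.
  - apply sin_mode_0.
  - apply sin_mode_end.
  - apply sin_mode_pos.
  - intros k Hk. apply sin_mode_rec. lia.
Qed.

Theorem mainTheorem6 (N : nat) (HN : (1 <= N)%nat) :
  (forall (theta : R) (a : nat -> R),
     0 <= theta < 1 ->
     sum_n (fun k => a k ^ 2) N = 1 ->
     W N theta a =
       1 - sum_n_m (fun k => a (k - 1)%nat * a k) 1 N
         - a 0%nat * a N * cos (2 * PI * INR (N + 1) * theta))
  /\
  (forall a : nat -> R,
     a 0%nat = 0 ->
     sum_n (fun k => a k ^ 2) N = 1 ->
     forall theta theta' : R, 0 <= theta < 1 -> 0 <= theta' < 1 ->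
       W N theta a = W N theta' a)
  /\
  (forall theta : R, 0 <= theta < 1 ->
     (forall a : nat -> R,
        a 0%nat = 0 ->
        sum_n_m (fun k => a k ^ 2) 1 N = 1 ->
        2 * sin (PI / INR (2 * N + 2)) ^ 2 <= W N theta a)
     /\
     (let astar := fun k : nat => sqrt (2 / INR (N + 1)) * sin (INR k * PI / INR (N + 1)) in
      sum_n_m (fun k => astar k ^ 2) 1 N = 1 /\
      W N theta astar = 2 * sin (PI / INR (2 * N + 2)) ^ 2)).
Proof.
  split; [|split].
  - intros theta a _ Hsq. rewrite W_closed_form, Hsq by exact HN. reflexivity.
  - intros a Ha0 _ theta theta' _ _. rewrite !W_closed_form, Ha0 by exact HN. R_eq; ring.
  - intros theta _. destruct N as [|M]; [lia|].
    rewrite <- one_minus_cos_half_angle. split.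
    + intros a Ha0 Hsq.
      assert (Hsum : sum_n (fun k => a k ^ 2) (S M) = 1)
        by (rewrite sum_n_split_head, Hsq, Ha0; R_eq; ring).
      pose proof (sin_mode_adjacent_le M a Ha0) as Hle.
      rewrite W_closed_form, sum_n_adjacent, Hsum, Ha0 by exact HN.
      rewrite Hsum in Hle. lra.
    + intros astar.
      pose proof (sum_scaled_sin_mode_sq (S M) HN) as Hsum.
      pose proof (sin_mode_adjacent_eq M (sqrt (2 / INR (S M + 1)))) as Heq.
      set (lam := sqrt (2 / INR (S M + 1))) in *.
      change astar with (fun k => lam * sin_mode (S M) k).
      rewrite Hsum in Heq. split.
      * rewrite sum_n_split_head, sin_mode_0 in Hsum. rewrite <- Hsum. R_eq; ring.
      * rewrite W_closed_form, (sum_n_adjacent (fun k => lam * sin_mode (S M) k)), sin_mode_0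
          by exact HN.
        rewrite Hsum. R_eq; lra.
Qed.
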